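(* On $\mathbb C^2\otimes\mathbb C^2$, let $|\pm\rangle=(|0\rangle\pm|1\rangle)/\sqrt2$, let $\rho_1=\tfrac12(|00\rangle\langle00|+|{+}{+}\rangle\langle{+}{+}|)$, and let $\rho_3=|\psi\rangle\langle\psi|$ with $|\psi\rangle$ the normalization of $\alpha|1\rangle|-\rangle+\beta|-\rangle|1\rangle$, where $\alpha\beta\neq0$. Then $\rho_1$ and $\rho_3$ are orthogonal and $\{\rho_1,\rho_3\}$ is not perfectly distinguishable by LOCC.
   Context: ''Perfectly distinguishable by LOCC'': a finite-round protocol of local measurements by the two parties with broadcast of outcomes identifies the given state with probability 1. States are orthogonal if $\mathrm{tr}(\rho_1\rho_3)=0$. *)

From HB Require Import structures.
From mathcomp Require Import all_boot all_order all_algebra.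
Set Implicit Arguments. Unset Strict Implicit. Unset Printing Implicit Defensive.
Import Order.TTheory GRing.Theory Num.Theory.
Local Open Scope ring_scope.

Section Qubits.
Variable C : numClosedFieldType.

Definition adj m n (A : 'M[C]_(m, n)) : 'M[C]_(n, m) := (map_mx (fun z => z^*) A)^T.

Definition ket0 : 'cV[C]_2 := \col_(i < 2) (if val i == 0%N then 1 else 0).
Definition ket1 : 'cV[C]_2 := \col_(i < 2) (if val i == 1%N then 1 else 0).
Definition ketp : 'cV[C]_2 := (sqrtC 2)^-1 *: (ket0 + ket1).
Definition ketm : 'cV[C]_2 := (sqrtC 2)^-1 *: (ket0 - ket1).

(* C^2 (x) C^2 = C^4, with |a>|b> at index 2a+b *)
Definition kket (a b : 'cV[C]_2) : 'cV[C]_4 :=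
  \col_(i < 4) (a (inord (i %/ 2)) 0 * b (inord (i %% 2)) 0).
Definition kron (A B : 'M[C]_2) : 'M[C]_4 :=
  \matrix_(i < 4, j < 4)
    (A (inord (i %/ 2)) (inord (j %/ 2)) * B (inord (i %% 2)) (inord (j %% 2))).

Definition ketbra n (v : 'cV[C]_n) : 'M[C]_n := v *m adj v.

Definition orthogonal_states (r1 r2 : 'M[C]_4) : Prop := \tr (r1 *m r2) = 0.

(* Finite-round LOCC protocols: a finite tree; at each node one party
   (Alice = first factor, Bob = second factor) performs a local measurement
   with finitely many outcomes, given by Kraus operators, and broadcasts the
   outcome; at a leaf the parties announce a guess of type I. *)
Inductive protocol (I : Type) :=
| Guess of I
| MeasA (n : nat) of ('I_n -> 'M[C]_2) & ('I_n -> protocol I)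
| MeasB (n : nat) of ('I_n -> 'M[C]_2) & ('I_n -> protocol I).

Fixpoint valid_protocol I (P : protocol I) : Prop :=
  match P with
  | Guess _ => True
  | MeasA n K nx => \sum_(k < n) (adj (K k) *m K k) = 1%:M /\
                    forall k, valid_protocol (nx k)
  | MeasB n K nx => \sum_(k < n) (adj (K k) *m K k) = 1%:M /\
                    forall k, valid_protocol (nx k)
  end.

(* probability that protocol P, started after the accumulated operator Acc
   has acted on the state rho, ends with guess j *)
Fixpoint guess_prob (I : eqType) (P : protocol I) (Acc rho : 'M[C]_4) (j : I) : C :=
  match P with
  | Guess g => if g == j then \tr (Acc *m rho *m adj Acc) else 0
  | MeasA n K nx => \sum_(k < n) guess_prob (nx k) (kron (K k) 1%:M *m Acc) rho j
  | MeasB n K nx => \sum_(k < n) guess_prob (nx k) (kron 1%:M (K k) *m Acc) rho j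
  end.

Definition LOCC_perfectly_distinguishable (I : eqType) (rho : I -> 'M[C]_4) : Prop :=
  exists P : protocol I, valid_protocol P /\
    forall i : I, guess_prob P 1%:M (rho i) i = 1.

End Qubits.

From HB Require Import structures.
From mathcomp Require Import all_boot all_order all_algebra ring.
Import Order.TTheory GRing.Theory Num.Theory.
Local Open Scope ring_scope.
Set Implicit Arguments. Unset Strict Implicit.

(* Orthogonality is a direct computation: psi is orthogonal to |00> and |++>.
   For the LOCC part, suppose a protocol guesses perfectly.  Then it never
   answers "rho3" on |00> or |++> and never answers "rho1" on psi
   ("errorless").  Positivity turns these zero error probabilities into
   orthogonality relations <psi|G|v> = <v|G|psi> = 0 (v = |00>, |++>) for the
   Gram matrix G = Acc^H Acc of the operations Acc performed up to any node.
   The key property of the triple is rigidity: if M (x) 1 or 1 (x) M preserves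
   these orthogonalities, then M is scalar.  By induction on the protocol
   tree, with Acc = a (x) b where a^H a and b^H b are scalar: in a branch of
   Alice's measurement the new factor K_k a again has scalar Gram matrix (by
   rigidity), so by induction the branch has zero Gram matrix, and
   completeness of the measurement then forces Acc^H Acc = 0 (likewise for
   Bob).  At the root Acc = 1, a contradiction. *)

Section Forms.
Variable C : numClosedFieldType.

(* The Gram matrix A^H A; for a product of Kraus operators it is the effect
   operator of the corresponding branch of a protocol. *)
Definition gram m n (A : 'M[C]_(m, n)) : 'M[C]_n := adj A *m A.

Definition qform n (x : 'cV[C]_n) (M : 'M[C]_n) (y : 'cV[C]_n) : C := (adj x *m M *m y) 0 0.

Lemma adjM m n p (A : 'M[C]_(m, n)) (B : 'M[C]_(n, p)) : adj (A *m B) = adj B *m adj A.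
Proof.
apply/matrixP => i j; rewrite !mxE rmorph_sum; apply: eq_bigr => k _.
by rewrite !mxE rmorphM mulrC.
Qed.

Lemma adjD m n (A B : 'M[C]_(m, n)) : adj (A + B) = adj A + adj B.
Proof. by apply/matrixP => i j; rewrite !mxE rmorphD. Qed.

Lemma adjZ m n a (A : 'M[C]_(m, n)) : adj (a *: A) = a^* *: adj A.
Proof. by apply/matrixP => i j; rewrite !mxE rmorphM. Qed.

Lemma adj0 m n : adj (0 : 'M[C]_(m, n)) = 0.
Proof. by apply/matrixP => i j; rewrite !mxE rmorph0. Qed.

Lemma adj1 n : adj (1%:M : 'M[C]_n) = 1%:M.
Proof. by apply/matrixP => i j; rewrite !mxE eq_sym; case: (_ == _); rewrite ?rmorph1 ?rmorph0. Qed.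

Lemma gramM m n p (A : 'M[C]_(m, n)) (B : 'M[C]_(n, p)) : gram (A *m B) = adj B *m gram A *m B.
Proof. by rewrite /gram adjM !mulmxA. Qed.

Lemma qform1 n (x y : 'cV[C]_n) : qform x 1%:M y = (adj x *m y) 0 0.
Proof. by rewrite /qform mulmx1. Qed.

Lemma qform_gram m n (A : 'M[C]_(m, n)) x y : qform x (gram A) y = (adj (A *m x) *m (A *m y)) 0 0.
Proof. by rewrite /qform /gram adjM !mulmxA. Qed.

Lemma qformDl n (x x' y : 'cV[C]_n) M : qform (x + x') M y = qform x M y + qform x' M y.
Proof. by rewrite /qform adjD !mulmxDl mxE. Qed.

Lemma qformDr n (x y y' : 'cV[C]_n) M : qform x M (y + y') = qform x M y + qform x M y'.
Proof. by rewrite /qform mulmxDr mxE. Qed.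

Lemma qformZl n a (x y : 'cV[C]_n) M : qform (a *: x) M y = a^* * qform x M y.
Proof. by rewrite /qform adjZ -!scalemxAl mxE. Qed.

Lemma qformZr n a (x y : 'cV[C]_n) M : qform x M (a *: y) = a * qform x M y.
Proof. by rewrite /qform -scalemxAr mxE. Qed.

Lemma qformZ n a (x y : 'cV[C]_n) M : qform x (a *: M) y = a * qform x M y.
Proof. by rewrite /qform -scalemxAr -scalemxAl mxE. Qed.

Lemma trace_rank1 m n (A : 'M[C]_(m, n)) (x y : 'cV[C]_n) :
  \tr (A *m (x *m adj y) *m adj A) = qform y (gram A) x.
Proof. by rewrite /qform /gram mulmxA -(mulmxA (A *m x)) mxtrace_mulC trace_mx11 !mulmxA. Qed.

Lemma sqnorm_ge0 n (x : 'cV[C]_n) : 0 <= (adj x *m x) 0 0.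
Proof. by rewrite mxE; apply: sumr_ge0 => k _; rewrite !mxE mulrC mul_conjC_ge0. Qed.

Lemma sqnorm_eq0 n (x : 'cV[C]_n) : (adj x *m x) 0 0 = 0 -> x = 0.
Proof.
have term_ge0 k : 0 <= adj x 0 k * x k 0 by rewrite !mxE mulrC mul_conjC_ge0.
rewrite mxE => /(psumr_eq0P (fun k _ => term_ge0 k)) Hx.
apply/matrixP => i j; rewrite (ord1 j) mxE.
by have /eqP := Hx i isT; rewrite !mxE mulrC mul_conjC_eq0 => /eqP.
Qed.

Lemma sqnorm_neq0 n (x : 'cV[C]_n) : x != 0 -> (adj x *m x) 0 0 != 0.
Proof. by move=> /eqP x0; apply/eqP => /sqnorm_eq0. Qed.

Lemma ketbraZ n a (x : 'cV[C]_n) : ketbra (a *: x) = (a * a^*) *: ketbra x.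
Proof. by rewrite /ketbra adjZ -scalemxAl -scalemxAr scalerA. Qed.

Lemma trace_ketbra n (x : 'cV[C]_n) : \tr (ketbra x) = (adj x *m x) 0 0.
Proof. by rewrite /ketbra mxtrace_mulC trace_mx11. Qed.

Lemma ketbra_orth n (x y : 'cV[C]_n) : adj x *m y = 0 -> ketbra x *m ketbra y = 0.
Proof. by rewrite /ketbra mulmxA -(mulmxA x) => ->; rewrite mulmx0 mul0mx. Qed.

Lemma sqnorm_normalize n (x : 'cV[C]_n) : x != 0 ->
  (sqrtC ((adj x *m x) 0 0))^-1 * ((sqrtC ((adj x *m x) 0 0))^-1)^* * (adj x *m x) 0 0 = 1.
Proof.
set c := (sqrtC _)^-1 => x0.
have c_real : c^* = c by apply: geC0_conj; rewrite invr_ge0 sqrtC_ge0 sqnorm_ge0.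
by rewrite c_real -expr2 exprVn sqrtCK mulVf // sqnorm_neq0.
Qed.

Lemma gram_complete n p (K : 'I_n -> 'M[C]_p) (a : 'M[C]_p) :
  \sum_(k < n) adj (K k) *m K k = 1%:M -> \sum_(k < n) gram (K k *m a) = gram a.
Proof.
move=> HK; under eq_bigr => k _ do rewrite gramM.
by rewrite -mulmx_suml -mulmx_sumr /gram HK mulmx1.
Qed.

End Forms.

Section Tensor.
Variable C : numClosedFieldType.

Lemma sum2 (F : 'I_2 -> C) : \sum_(i < 2) F i = F (inord 0) + F (inord 1).
Proof.
by rewrite !big_ord_recl big_ord0 addr0; congr (F _ + F _); apply/val_inj; rewrite /= inordK.
Qed.

Lemma sum4 (F : 'I_4 -> C) :
  \sum_(i < 4) F i = F (inord 0) + F (inord 1) + F (inord 2) + F (inord 3).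
Proof.
rewrite !big_ord_recl big_ord0 addr0 !addrA.
by congr (F _ + F _ + F _ + F _); apply/val_inj; rewrite /= inordK.
Qed.

Lemma kronM (A B A' B' : 'M[C]_2) : kron A B *m kron A' B' = kron (A *m A') (B *m B').
Proof. by apply/matrixP => i j; rewrite !mxE sum4 !sum2 !mxE !inordK //=; ring. Qed.

Lemma adj_kron (A B : 'M[C]_2) : adj (kron A B) = kron (adj A) (adj B).
Proof. by apply/matrixP => i j; rewrite !mxE rmorphM. Qed.

Lemma gram_kron (a b : 'M[C]_2) : gram (kron a b) = kron (gram a) (gram b).
Proof. by rewrite /gram adj_kron kronM. Qed.

Lemma kronZl c (A B : 'M[C]_2) : kron (c *: A) B = c *: kron A B.
Proof. by apply/matrixP => i j; rewrite !mxE mulrA. Qed.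

Lemma kronZr c (A B : 'M[C]_2) : kron A (c *: B) = c *: kron A B.
Proof. by apply/matrixP => i j; rewrite !mxE mulrCA. Qed.

Lemma kron_suml I (r : seq I) (P : pred I) (A : I -> 'M[C]_2) B :
  kron (\sum_(k <- r | P k) A k) B = \sum_(k <- r | P k) kron (A k) B.
Proof.
apply/matrixP => i j; rewrite !mxE !summxE big_distrl /=.
by apply: eq_bigr => k _; rewrite !mxE.
Qed.

Lemma kron_sumr I (r : seq I) (P : pred I) (A : I -> 'M[C]_2) B :
  kron B (\sum_(k <- r | P k) A k) = \sum_(k <- r | P k) kron B (A k).
Proof.
apply/matrixP => i j; rewrite !mxE !summxE big_distrr /=.
by apply: eq_bigr => k _; rewrite !mxE.
Qed.

Lemma kron_scalar (a b : C) : kron a%:M b%:M = (a * b)%:M.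
Proof.
apply/matrixP => -[[|[|[|[|i]]]] Hi] // [[|[|[|[|j]]]] Hj] //;
  rewrite !mxE -!val_eqE /= ?inordK //=; ring.
Qed.

Lemma qform_kket (a b c d : 'cV[C]_2) (A B : 'M[C]_2) :
  qform (kket a b) (kron A B) (kket c d) = qform a A c * qform b B d.
Proof. by rewrite /qform !mxE !sum4 !sum2 !mxE !sum4 !sum2 !mxE !inordK //= !rmorphM; ring. Qed.

Lemma kron11 : kron (1%:M : 'M[C]_2) 1%:M = 1%:M.
Proof. by rewrite kron_scalar mulr1. Qed.

Lemma kron_scalar_r (A : 'M[C]_2) c : kron A c%:M = c *: kron A 1%:M.
Proof. by rewrite -kronZr scale_scalar_mx mulr1. Qed.

Lemma kron_scalar_l (A : 'M[C]_2) c : kron c%:M A = c *: kron 1%:M A.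
Proof. by rewrite -kronZl scale_scalar_mx mulr1. Qed.

Lemma qform2E (x y : 'cV[C]_2) M :
  qform x M y = \sum_(j < 2) \sum_(i < 2) (x i 0)^* * M i j * y j 0.
Proof.
rewrite /qform mxE; apply: eq_bigr => j _; rewrite mxE big_distrl /=.
by apply: eq_bigr => i _; rewrite !mxE.
Qed.

End Tensor.

Section Protocols.
Variable C : numClosedFieldType.
Implicit Types (Acc M N : 'M[C]_4) (x y : 'cV[C]_4).

Lemma guess_probD (I : eqType) (P : protocol C I) Acc M N j :
  guess_prob P Acc (M + N) j = guess_prob P Acc M j + guess_prob P Acc N j.
Proof.
elim: P Acc => [g|n K nx IH|n K nx IH] Acc /=; last 2 first.
- by rewrite -big_split; apply: eq_bigr => k _; rewrite IH.
- by rewrite -big_split; apply: eq_bigr => k _; rewrite IH.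
by case: (g == j); rewrite ?addr0 // mulmxDr mulmxDl mxtraceD.
Qed.

Lemma guess_probZ (I : eqType) (P : protocol C I) Acc a M j :
  guess_prob P Acc (a *: M) j = a * guess_prob P Acc M j.
Proof.
elim: P Acc => [g|n K nx IH|n K nx IH] Acc /=; last 2 first.
- by rewrite mulr_sumr; apply: eq_bigr => k _; rewrite IH.
- by rewrite mulr_sumr; apply: eq_bigr => k _; rewrite IH.
by case: (g == j); rewrite ?mulr0 // -scalemxAr -scalemxAl mxtraceZ.
Qed.

Lemma guess_prob_ge0 (I : eqType) (P : protocol C I) Acc x j :
  0 <= guess_prob P Acc (ketbra x) j.
Proof.
elim: P Acc => [g|n K nx IH|n K nx IH] Acc /=; try by apply: sumr_ge0 => k _.
by case: (g == j) => //; rewrite trace_rank1 qform_gram sqnorm_ge0.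
Qed.

(* If guess j never occurs on the pure state x, it does not occur on the
   "coherences" x y^H and y x^H either (Cauchy-Schwarz at every leaf). *)
Lemma guess_prob_coherence (I : eqType) (P : protocol C I) Acc x y j :
  guess_prob P Acc (ketbra x) j = 0 ->
  guess_prob P Acc (x *m adj y) j = 0 /\ guess_prob P Acc (y *m adj x) j = 0.
Proof.
elim: P Acc => [g|n K nx IH|n K nx IH] Acc /=.
- case: (g == j) => //; rewrite !trace_rank1 !qform_gram => /sqnorm_eq0 Ax0.
  by rewrite Ax0 mulmx0 adj0 mul0mx !mxE.
- move=> /(psumr_eq0P (fun k _ => guess_prob_ge0 _ _ _ _)) H0.
  by split; apply: big1 => k _; have [] := IH k _ (H0 k isT).
- move=> /(psumr_eq0P (fun k _ => guess_prob_ge0 _ _ _ _)) H0.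
  by split; apply: big1 => k _; have [] := IH k _ (H0 k isT).
Qed.

Lemma trace_complete n (B : 'I_n -> 'M[C]_4) Acc M :
  \sum_(k < n) gram (B k) = 1%:M ->
  \sum_(k < n) \tr ((B k *m Acc) *m M *m adj (B k *m Acc)) = \tr (Acc *m M *m adj Acc).
Proof.
move=> HB; under eq_bigr => k _ do rewrite adjM mulmxA -!mulmxA mxtrace_mulC !mulmxA -(mulmxA _ _ (B k)).
by rewrite -raddf_sum -mulmx_sumr HB mulmx1.
Qed.

Lemma complete_kronl n (K : 'I_n -> 'M[C]_2) :
  \sum_(k < n) gram (K k) = 1%:M -> \sum_(k < n) gram (kron (K k) 1%:M) = 1%:M.
Proof.
move=> HK; under eq_bigr => k _ do rewrite gram_kron /gram adj1 mul1mx.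
by rewrite -kron_suml HK kron11.
Qed.

Lemma complete_kronr n (K : 'I_n -> 'M[C]_2) :
  \sum_(k < n) gram (K k) = 1%:M -> \sum_(k < n) gram (kron 1%:M (K k)) = 1%:M.
Proof.
move=> HK; under eq_bigr => k _ do rewrite gram_kron /gram adj1 mul1mx.
by rewrite -kron_sumr HK kron11.
Qed.

Lemma guess_prob_total (P : protocol C bool) Acc M : valid_protocol P ->
  guess_prob P Acc M true + guess_prob P Acc M false = \tr (Acc *m M *m adj Acc).
Proof.
elim: P Acc => [g|n K nx IH|n K nx IH] Acc /=.
- by case: g => _; rewrite ?addr0 ?add0r.
- case=> /complete_kronl HK Hv; rewrite -big_split -(trace_complete _ _ HK) /=.
  by apply: eq_bigr => k _; rewrite IH.
- case=> /complete_kronr HK Hv; rewrite -big_split -(trace_complete _ _ HK) /=.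
  by apply: eq_bigr => k _; rewrite IH.
Qed.

Lemma guess_prob_orth (P : protocol C bool) Acc x y : valid_protocol P ->
  guess_prob P Acc (ketbra x) false = 0 -> guess_prob P Acc (ketbra y) true = 0 ->
  qform y (gram Acc) x = 0 /\ qform x (gram Acc) y = 0.
Proof.
move=> Hv /(guess_prob_coherence y) [xy0 yx0] /(guess_prob_coherence x) [yx1 xy1].
by rewrite -!trace_rank1 -!(guess_prob_total _ _ Hv) xy0 yx0 xy1 yx1 addr0.
Qed.

Lemma perfect_guess_exclusive (P : protocol C bool) rho b : valid_protocol P ->
  \tr rho = 1 -> guess_prob P 1%:M rho b = 1 -> guess_prob P 1%:M rho (~~ b) = 0.
Proof.
move=> Hv tr1 Hb; have := guess_prob_total 1%:M rho Hv.
rewrite adj1 mul1mx mulmx1 tr1.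
by case: b Hb => /= -> total; apply: (addrI 1); rewrite addr0 // addrC.
Qed.

Lemma guess_prob_mix_eq0 (I : eqType) (P : protocol C I) Acc x y j :
  guess_prob P Acc (2^-1 *: (ketbra x + ketbra y)) j = 0 ->
  guess_prob P Acc (ketbra x) j = 0 /\ guess_prob P Acc (ketbra y) j = 0.
Proof.
rewrite guess_probZ guess_probD => /eqP; rewrite mulf_eq0 invr_eq0 pnatr_eq0 /=.
by rewrite paddr_eq0 ?guess_prob_ge0 // => /andP [/eqP -> /eqP ->].
Qed.

End Protocols.

Section LocalIndistinguishability.
Variable C : numClosedFieldType.
Variables (v1 v2 psi : 'cV[C]_4).

Definition keeps_orth (G : 'M[C]_4) : Prop :=
  [/\ qform psi G v1 = 0, qform v1 G psi = 0, qform psi G v2 = 0 & qform v2 G psi = 0].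

Definition errorless (P : protocol C bool) (Acc : 'M[C]_4) : Prop :=
  [/\ guess_prob P Acc (ketbra v1) false = 0, guess_prob P Acc (ketbra v2) false = 0
    & guess_prob P Acc (ketbra psi) true = 0].

Lemma errorless_keeps_orth P Acc :
  valid_protocol P -> errorless P Acc -> keeps_orth (gram Acc).
Proof.
move=> Hv [H1 H2 H3].
have [o1 o2] := guess_prob_orth Hv H1 H3; have [o3 o4] := guess_prob_orth Hv H2 H3.
by split.
Qed.

Lemma keeps_orthZ c G : c != 0 -> keeps_orth (c *: G) -> keeps_orth G.
Proof.
by move=> c0 []; rewrite !qformZ => /eqP o1 /eqP o2 /eqP o3 /eqP o4;
  split; apply/eqP; move: o1 o2 o3 o4; rewrite !mulf_eq0 (negPf c0).
Qed.

Lemma errorless_MeasA n K nx Acc : errorless (@MeasA C bool n K nx) Acc ->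
  forall k, errorless (nx k) (kron (K k) 1%:M *m Acc).
Proof.
move=> [H1 H2 H3] k.
by split; [move: H1 | move: H2 | move: H3] => /(psumr_eq0P (fun i _ => guess_prob_ge0 _ _ _ _)) ->.
Qed.

Lemma errorless_MeasB n K nx Acc : errorless (@MeasB C bool n K nx) Acc ->
  forall k, errorless (nx k) (kron 1%:M (K k) *m Acc).
Proof.
move=> [H1 H2 H3] k.
by split; [move: H1 | move: H2 | move: H3] => /(psumr_eq0P (fun i _ => guess_prob_ge0 _ _ _ _)) ->.
Qed.

Hypothesis v1_neq0 : v1 != 0.
Hypothesis psi_neq0 : psi != 0.

Lemma errorless_Guess g Acc c : gram Acc = c%:M -> errorless (Guess C g) Acc -> c = 0.
Proof.
move=> EAcc [H1 _ H3]; have [x x0 Hx] : exists2 x, x != 0 & qform x (gram Acc) x = 0.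
  by case: g H1 H3 => /= H1 H3; [exists psi | exists v1]; rewrite // -trace_rank1.
move: Hx; rewrite EAcc -scalemx1 qformZ qform1 => /eqP.
by rewrite mulf_eq0 (negPf (sqnorm_neq0 x0)) orbF => /eqP.
Qed.

Hypothesis rigidA : forall M : 'M[C]_2, keeps_orth (kron M 1%:M) -> is_scalar_mx M.
Hypothesis rigidB : forall M : 'M[C]_2, keeps_orth (kron 1%:M M) -> is_scalar_mx M.

Theorem errorless_product_gram0 (P : protocol C bool) : valid_protocol P ->
  forall a b : 'M[C]_2, is_scalar_mx (gram a) -> is_scalar_mx (gram b) ->
  errorless P (kron a b) -> gram (kron a b) = 0.
Proof.
elim: P => [g|n K nx IH|n K nx IH] /= Hv a b Ha Hb Herr.
  have [lam Ea] := is_scalar_mxP Ha; have [mu Eb] := is_scalar_mxP Hb.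
  have Eab : gram (kron a b) = (lam * mu)%:M by rewrite gram_kron Ea Eb kron_scalar.
  by rewrite Eab (errorless_Guess Eab Herr) raddf0.
- case: Hv => HK Hv; have [mu Eb] := is_scalar_mxP Hb.
  have [mu0|mu_neq0] := eqVneq mu 0.
    by rewrite gram_kron Eb mu0 kron_scalar_r scale0r.
  have branch0 k : gram (kron (K k *m a) b) = 0.
    have Hk := errorless_MeasA Herr k; rewrite kronM mul1mx in Hk.
    apply: (IH k (Hv k) _ _ _ Hb Hk); apply: rigidA; apply: (keeps_orthZ mu_neq0).
    by rewrite -kron_scalar_r -Eb -gram_kron; exact: errorless_keeps_orth (Hv k) Hk.
  rewrite gram_kron -(gram_complete a HK) kron_suml big1 // => k _.
  by rewrite -gram_kron branch0.
- case: Hv => HK Hv; have [lam Ea] := is_scalar_mxP Ha.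
  have [lam0|lam_neq0] := eqVneq lam 0.
    by rewrite gram_kron Ea lam0 kron_scalar_l scale0r.
  have branch0 k : gram (kron a (K k *m b)) = 0.
    have Hk := errorless_MeasB Herr k; rewrite kronM mul1mx in Hk.
    apply: (IH k (Hv k) _ _ Ha _ Hk); apply: rigidB; apply: (keeps_orthZ lam_neq0).
    by rewrite -kron_scalar_l -Ea -gram_kron; exact: errorless_keeps_orth (Hv k) Hk.
  rewrite gram_kron -(gram_complete b HK) kron_sumr big1 // => k _.
  by rewrite -gram_kron branch0.
Qed.

Theorem errorless_impossible P : valid_protocol P -> ~ errorless P 1%:M.
Proof.
move=> Hv Herr; have gram1 : gram (1%:M : 'M[C]_2) = 1%:M by rewrite /gram adj1 mul1mx.
have scalar1 : is_scalar_mx (gram (1%:M : 'M[C]_2)) by rewrite gram1 scalar_mx_is_scalar.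
have := errorless_product_gram0 Hv scalar1 scalar1; rewrite kron11 => /(_ Herr).
by rewrite /gram adj1 mul1mx => /matrixP /(_ 0 0) /eqP; rewrite !mxE eqxx oner_eq0.
Qed.

End LocalIndistinguishability.

Section Example.
Variable C : numClosedFieldType.
Variables alpha beta : C.
Local Notation r := ((sqrtC (2 : C))^-1).
Local Notation v1 := (kket (ket0 C) (ket0 C)).
Local Notation v2 := (kket (ketp C) (ketp C)).
Local Notation psi := (alpha *: kket (ket1 C) (ketm C) + beta *: kket (ketm C) (ket1 C)).

Lemma r_conj : r^* = r.
Proof. by apply: geC0_conj; rewrite invr_ge0 sqrtC_ge0 ler0n. Qed.

(* Expand matrix elements between one-qubit kets into explicit entries; the
   entries of the kets are real, so their conjugates simplify away. *)
Ltac expand_qubit_qforms :=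
  rewrite ?qform2E !sum2 !mxE -!val_eqE /= !inordK //=
    ?addr0 ?add0r ?subr0 ?sub0r ?mulr1 ?mulrN1 ?rmorphN ?rmorph1 ?rmorph0 /= ?r_conj.

Lemma r_sq : r * r = 2^-1.
Proof. by rewrite -expr2 exprVn sqrtCK. Qed.

Lemma r_neq0 : r != 0.
Proof. by rewrite invr_eq0 sqrtC_eq0 pnatr_eq0. Qed.

Lemma qform_psi_l (x y : 'cV[C]_2) (A B : 'M[C]_2) : qform psi (kron A B) (kket x y) =
  alpha^* * (qform (ket1 C) A x * qform (ketm C) B y)
  + beta^* * (qform (ketm C) A x * qform (ket1 C) B y).
Proof. by rewrite qformDl (qformZl alpha) (qformZl beta) !qform_kket. Qed.

Lemma qform_psi_r (x y : 'cV[C]_2) (A B : 'M[C]_2) : qform (kket x y) (kron A B) psi =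
  alpha * (qform x A (ket1 C) * qform y B (ketm C))
  + beta * (qform x A (ketm C) * qform y B (ket1 C)).
Proof. by rewrite qformDr (qformZr alpha) (qformZr beta) !qform_kket. Qed.

Lemma cancel_factor (x y : C) : x != 0 -> x * y = 0 -> y = 0.
Proof. by move=> x0 /eqP; rewrite mulf_eq0 (negPf x0) => /eqP. Qed.

Lemma scalar_qubit_mx (M : 'M[C]_2) :
  M (inord 1) (inord 0) = 0 -> M (inord 0) (inord 1) = 0 ->
  M (inord 0) (inord 0) = M (inord 1) (inord 1) -> is_scalar_mx M.
Proof.
move=> M10 M01 Mdiag; apply/is_scalar_mxP; exists (M (inord 0) (inord 0)).
have ord2 (i : 'I_2) : i = inord 0 \/ i = inord 1.
  by case: i => -[|[|//]] Hi; [left | right]; apply/val_inj; rewrite /= inordK.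
apply/matrixP => i j; rewrite mxE.
by case: (ord2 i) (ord2 j) => -> [] ->; rewrite -val_eqE /= !inordK.
Qed.

Hypotheses (alpha_neq0 : alpha != 0) (beta_neq0 : beta != 0).

Let alpha_conj_neq0 : alpha^* != 0. Proof. by rewrite conjC_eq0. Qed.
Let beta_conj_neq0 : beta^* != 0. Proof. by rewrite conjC_eq0. Qed.
Let r3_neq0 : r * (r * r) != 0. Proof. by rewrite !mulf_neq0 ?r_neq0. Qed.

(* Alice cannot act nontrivially without breaking an orthogonality:
   <psi|M(x)1|00> and <00|M(x)1|psi> kill the off-diagonal entries of M, and
   <psi|M(x)1|++> then equalises its diagonal entries. *)
Lemma rigid_Alice (M : 'M[C]_2) : keeps_orth v1 v2 psi (kron M 1%:M) -> is_scalar_mx M.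
Proof.
case; rewrite qform_psi_l qform_psi_r qform_psi_l => o1 o2 o3 _.
have e1 : alpha^* * r * M (inord 1) (inord 0) = 0 by rewrite -o1; expand_qubit_qforms; ring.
have e2 : alpha * r * M (inord 0) (inord 1) = 0 by rewrite -o2; expand_qubit_qforms; ring.
have e3 : beta^* * (r * (r * r)) * (M (inord 0) (inord 0) + M (inord 0) (inord 1)
   - M (inord 1) (inord 0) - M (inord 1) (inord 1)) = 0 by rewrite -o3; expand_qubit_qforms; ring.
have M10 := cancel_factor (mulf_neq0 alpha_conj_neq0 r_neq0) e1.
have M01 := cancel_factor (mulf_neq0 alpha_neq0 r_neq0) e2.
move: e3; rewrite M10 M01 addr0 subr0 => /(cancel_factor (mulf_neq0 beta_conj_neq0 r3_neq0)).
by move/eqP; rewrite subr_eq0 => /eqP; exact: scalar_qubit_mx.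
Qed.

Lemma rigid_Bob (M : 'M[C]_2) : keeps_orth v1 v2 psi (kron 1%:M M) -> is_scalar_mx M.
Proof.
case; rewrite qform_psi_l qform_psi_r qform_psi_l => o1 o2 o3 _.
have e1 : beta^* * r * M (inord 1) (inord 0) = 0 by rewrite -o1; expand_qubit_qforms; ring.
have e2 : beta * r * M (inord 0) (inord 1) = 0 by rewrite -o2; expand_qubit_qforms; ring.
have e3 : alpha^* * (r * (r * r)) * (M (inord 0) (inord 0) + M (inord 0) (inord 1)
   - M (inord 1) (inord 0) - M (inord 1) (inord 1)) = 0 by rewrite -o3; expand_qubit_qforms; ring.
have M10 := cancel_factor (mulf_neq0 beta_conj_neq0 r_neq0) e1.
have M01 := cancel_factor (mulf_neq0 beta_neq0 r_neq0) e2.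
move: e3; rewrite M10 M01 addr0 subr0 => /(cancel_factor (mulf_neq0 alpha_conj_neq0 r3_neq0)).
by move/eqP; rewrite subr_eq0 => /eqP; exact: scalar_qubit_mx.
Qed.

Lemma sqnorm_v1 : (adj v1 *m v1) 0 0 = 1.
Proof. by rewrite -qform1 -kron11 qform_kket; expand_qubit_qforms; ring. Qed.

Lemma sqnorm_v2 : (adj v2 *m v2) 0 0 = 1.
Proof.
rewrite -qform1 -kron11 qform_kket; expand_qubit_qforms.
transitivity ((2 * (r * r)) ^+ 2); first ring.
by rewrite r_sq mulfV ?pnatr_eq0 // expr1n.
Qed.

Lemma v1_neq0 : v1 != 0.
Proof. by apply/eqP => v0; move: sqnorm_v1; rewrite v0 mulmx0 mxE => /eqP; rewrite eq_sym oner_eq0. Qed.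

Lemma psi_orth_v1 : adj v1 *m psi = 0.
Proof.
apply/matrixP => i j; rewrite !ord1 [RHS]mxE -qform1 -kron11 qform_psi_r.
by expand_qubit_qforms; ring.
Qed.

Lemma psi_orth_v2 : adj v2 *m psi = 0.
Proof.
apply/matrixP => i j; rewrite !ord1 [RHS]mxE -qform1 -kron11 qform_psi_r.
by expand_qubit_qforms; ring.
Qed.

(* psi has the nonzero coordinate beta/sqrt 2 on |01>. *)
Lemma psi_neq0 : psi != 0.
Proof.
apply/eqP => psi0; have : qform (kket (ket0 C) (ket1 C)) (kron 1%:M 1%:M) psi = beta * r.
  by rewrite qform_psi_r; expand_qubit_qforms; ring.
by rewrite psi0 /qform mulmx0 mxE => /esym/eqP; rewrite mulf_eq0 (negPf beta_neq0) (negPf r_neq0).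
Qed.

End Example.

Unset Implicit Arguments.

Theorem mainTheorem8 (C : numClosedFieldType) (alpha beta : C) :
  alpha * beta != 0 ->
  let rho1 : 'M[C]_4 :=
    2^-1 *: (ketbra (kket (ket0 C) (ket0 C)) + ketbra (kket (ketp C) (ketp C))) in
  let psi : 'cV[C]_4 :=
    alpha *: kket (ket1 C) (ketm C) + beta *: kket (ketm C) (ket1 C) in
  let rho3 : 'M[C]_4 :=
    ketbra ((sqrtC ((adj psi *m psi) 0 0))^-1 *: psi) in
  orthogonal_states rho1 rho3 /\
  ~ LOCC_perfectly_distinguishable (fun b : bool => if b then rho1 else rho3).
Proof.
move=> Hab rho1 psi rho3; have /andP [alpha0 beta0] : (alpha != 0) && (beta != 0).
  by rewrite -negb_or -mulf_eq0.
have psi0 : psi != 0 := psi_neq0 alpha beta0.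
have := sqnorm_normalize psi0; set c := (sqrtC _)^-1 => norm_c.
have rho3E : rho3 = (c * c^*) *: ketbra psi by rewrite /rho3 ketbraZ.
have c_neq0 : c * c^* != 0.
  by have := oner_neq0 C; rewrite -norm_c mulf_eq0 negb_or => /andP [].
split.
  rewrite /orthogonal_states rho3E -scalemxAr -scalemxAl mulmxDl !ketbra_orth ?psi_orth_v1 ?psi_orth_v2 //.
  by rewrite addr0 !scaler0 raddf0.
case=> P [Hv perfect].
have tr_rho1 : \tr rho1 = 1.
  rewrite /rho1 mxtraceZ mxtraceD !trace_ketbra sqnorm_v1 sqnorm_v2.
  by rewrite -mulr2n mulVf ?pnatr_eq0.
have tr_rho3 : \tr rho3 = 1 by rewrite rho3E mxtraceZ trace_ketbra.
have [err1 err2] := guess_prob_mix_eq0 (perfect_guess_exclusive Hv tr_rho1 (perfect true)).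
have := perfect_guess_exclusive Hv tr_rho3 (perfect false); rewrite rho3E guess_probZ.
move=> /(cancel_factor c_neq0) err3.
apply: (errorless_impossible (v1_neq0 C) psi0 (rigid_Alice alpha0 beta0) (rigid_Bob alpha0 beta0) Hv).
by split.
Qed.
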